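(* Every well-typed $\lambda\mu\mathrm{T}$-term is strongly normalizing: if $\Gamma;\Delta\vdash t:\rho$, then there is no infinite reduction sequence $t\to t_1\to t_2\to\cdots$.
   Context: The calculus $\lambda\mu\mathrm{T}$. Types: $\rho,\sigma,\tau ::= \mathbb{N} \mid \sigma\to\tau$. Over infinite sets of $\lambda$-variables $x,y,\dots$ and $\mu$-variables $\alpha,\beta,\gamma,\dots$, terms and commands are mutually defined by $t,r,s ::= x \mid \lambda x{:}\rho.r \mid t\,s \mid \mu\alpha{:}\rho.c \mid 0 \mid \mathsf{S}\,t \mid \mathsf{nrec}_\rho\ r\ s\ t$ and $c ::= [\alpha]t$ (type annotations often omitted). $\lambda x$ binds $x$, $\mu\alpha$ binds $\alpha$; terms are considered modulo renaming of bound variables; $FV(t)$, $FCV(t)$ are the free $\lambda$- and $\mu$-variables. $t[x:=r]$ is capture-avoiding substitution. Numerals: $\underline{n} := \mathsf{S}^n 0$. Contexts: $E ::= \Box \mid E\,t \mid \mathsf{S}\,E \mid \mathsf{nrec}\ r\ s\ E$; $E[u]$ is the result of filling the hole with $u$. Structural substitution $t[\alpha:=\beta E]$ ($\beta$ a $\mu$-variable, $E$ a context) is defined homomorphically on all constructs (capture-avoiding for both kinds of variables) except $([\alpha]u)[\alpha:=\beta E] := [\beta]E[u[\alpha:=\beta E]]$ (and $([\gamma]u)[\alpha:=\beta E]:=[\gamma](u[\alpha:=\beta E])$ for $\gamma\neq\alpha$). Typing judgments $\Gamma;\Delta\vdash t:\rho$ and $\Gamma;\Delta\vdash c$ ($\Gamma$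 assigns types to $\lambda$-variables, $\Delta$ to $\mu$-variables) are generated by: (var) $x:\rho\in\Gamma \Rightarrow \Gamma;\Delta\vdash x:\rho$; (lambda) $\Gamma,x:\sigma;\Delta\vdash t:\tau \Rightarrow \Gamma;\Delta\vdash\lambda x{:}\sigma.t:\sigma\to\tau$; (app) $\Gamma;\Delta\vdash t:\sigma\to\tau$ and $\Gamma;\Delta\vdash s:\sigma$ $\Rightarrow \Gamma;\Delta\vdash ts:\tau$; (zero) $\Gamma;\Delta\vdash 0:\mathbb{N}$; (suc) $\Gamma;\Delta\vdash t:\mathbb{N}\Rightarrow\Gamma;\Delta\vdash \mathsf{S}\,t:\mathbb{N}$; (nrec) $\Gamma;\Delta\vdash r:\rho$, $\Gamma;\Delta\vdash s:\mathbb{N}\to\rho\to\rho$, $\Gamma;\Delta\vdash t:\mathbb{N}$ $\Rightarrow \Gamma;\Delta\vdash\mathsf{nrec}_\rho\ r\ s\ t:\rho$; (activate) $\Gamma;\Delta,\alpha:\rho\vdash c\Rightarrow\Gamma;\Delta\vdash\mu\alpha{:}\rho.c:\rho$; (passivate) $\Gamma;\Delta\vdash t:\rho$ and $\alpha:\rho\in\Delta$ $\Rightarrow \Gamma;\Delta\vdash[\alpha]t$. Reduction $\to$ is the compatible closure (on terms and commands) of: ($\beta$) $(\lambda x.t)r\to t[x:=r]$; ($\mu\mathsf{S}$) $\mathsf{S}(\mu\alpha.c)\to\mu\alpha.c[\alpha:=\alpha(\mathsf{S}\,\Box)]$; ($\mu R$) $(\mu\alpha.c)s\to\mu\alpha.c[\alpha:=\alpha(\Box\,s)]$;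 ($\mu\eta$) $\mu\alpha.[\alpha]t\to t$ if $\alpha\notin FCV(t)$; ($\mu i$) $[\alpha]\mu\beta.c\to c[\beta:=\alpha\,\Box]$; ($0$) $\mathsf{nrec}\ r\ s\ 0\to r$; ($\mathsf{S}$) $\mathsf{nrec}\ r\ s\ (\mathsf{S}\,\underline{n})\to s\ \underline{n}\ (\mathsf{nrec}\ r\ s\ \underline{n})$; ($\mu\mathbb{N}$) $\mathsf{nrec}\ r\ s\ (\mu\alpha.c)\to\mu\alpha.c[\alpha:=\alpha(\mathsf{nrec}\ r\ s\ \Box)]$. *)

(* The calculus lambda-mu-T, Church style, locally nameless-free
   de Bruijn representation: lambda-variables and mu-variables are two separate
   kinds of de Bruijn indices. *)
From Stdlib Require Import List Arith.

Inductive ty : Type :=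
| TNat : ty
| Arr : ty -> ty -> ty.

(* Terms and commands.  [Var n] is the lambda-variable with index n;
   [Lam A t] = lambda x:A. t (binds lambda-index 0 in t);
   [Mu A c]  = mu alpha:A. c (binds mu-index 0 in c);
   [Nrec A r s t] = nrec_A r s t;  [Pass a t] = [alpha_a] t. *)
Inductive tm : Type :=
| Var : nat -> tm
| Lam : ty -> tm -> tm
| App : tm -> tm -> tm
| Mu : ty -> cmd -> tm
| Zero : tm
| Suc : tm -> tm
| Nrec : ty -> tm -> tm -> tm -> tm
with cmd : Type :=
| Pass : nat -> tm -> cmd.

Fixpoint numeral (n : nat) : tm :=
  match n with 0 => Zero | S m => Suc (numeral m) end.

Definition up (f : nat -> nat) : nat -> nat :=
  fun n => match n with 0 => 0 | S m => S (f m) end.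

Fixpoint ren_tm (xi zeta : nat -> nat) (t : tm) : tm :=
  match t with
  | Var n => Var (xi n)
  | Lam A b => Lam A (ren_tm (up xi) zeta b)
  | App a b => App (ren_tm xi zeta a) (ren_tm xi zeta b)
  | Mu A c => Mu A (ren_cmd xi (up zeta) c)
  | Zero => Zero
  | Suc a => Suc (ren_tm xi zeta a)
  | Nrec A r s u => Nrec A (ren_tm xi zeta r) (ren_tm xi zeta s) (ren_tm xi zeta u)
  end
with ren_cmd (xi zeta : nat -> nat) (c : cmd) : cmd :=
  match c with
  | Pass a u => Pass (zeta a) (ren_tm xi zeta u)
  end.

Definition lift_lam (t : tm) : tm := ren_tm S (fun n => n) t.
Definition lift_mu (t : tm) : tm := ren_tm (fun n => n) S t.

Definition up_sub (sigma : nat -> tm) : nat -> tm :=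
  fun n => match n with 0 => Var 0 | S m => lift_lam (sigma m) end.

Fixpoint subst_tm (sigma : nat -> tm) (t : tm) : tm :=
  match t with
  | Var n => sigma n
  | Lam A b => Lam A (subst_tm (up_sub sigma) b)
  | App a b => App (subst_tm sigma a) (subst_tm sigma b)
  | Mu A c => Mu A (subst_cmd (fun n => lift_mu (sigma n)) c)
  | Zero => Zero
  | Suc a => Suc (subst_tm sigma a)
  | Nrec A r s u => Nrec A (subst_tm sigma r) (subst_tm sigma s) (subst_tm sigma u)
  end
with subst_cmd (sigma : nat -> tm) (c : cmd) : cmd :=
  match c with
  | Pass a u => Pass a (subst_tm sigma u)
  end.

(* t[x := r] where x is lambda-index 0 (which is removed) *)
Definition subst1 (t r : tm) : tm :=
  subst_tm (fun n => match n with 0 => r | S m => Var m end) t.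

Inductive ectx : Type :=
| Hole : ectx
| EApp : ectx -> tm -> ectx
| ESuc : ectx -> ectx
| ENrec : ty -> tm -> tm -> ectx -> ectx.

Fixpoint fill (E : ectx) (u : tm) : tm :=
  match E with
  | Hole => u
  | EApp E' t => App (fill E' u) t
  | ESuc E' => Suc (fill E' u)
  | ENrec A r s E' => Nrec A r s (fill E' u)
  end.

Fixpoint ren_ectx (xi zeta : nat -> nat) (E : ectx) : ectx :=
  match E with
  | Hole => Hole
  | EApp E' t => EApp (ren_ectx xi zeta E') (ren_tm xi zeta t)
  | ESuc E' => ESuc (ren_ectx xi zeta E')
  | ENrec A r s E' => ENrec A (ren_tm xi zeta r) (ren_tm xi zeta s) (ren_ectx xi zeta E')
  end.

(* Structural substitution t[alpha := alpha E] where alpha is mu-index k: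
   every command [alpha]u becomes [alpha] E[u[alpha := alpha E]]. *)
Fixpoint ssub_tm (k : nat) (E : ectx) (t : tm) : tm :=
  match t with
  | Var n => Var n
  | Lam A b => Lam A (ssub_tm k (ren_ectx S (fun n => n) E) b)
  | App a b => App (ssub_tm k E a) (ssub_tm k E b)
  | Mu A c => Mu A (ssub_cmd (S k) (ren_ectx (fun n => n) S E) c)
  | Zero => Zero
  | Suc a => Suc (ssub_tm k E a)
  | Nrec A r s u => Nrec A (ssub_tm k E r) (ssub_tm k E s) (ssub_tm k E u)
  end
with ssub_cmd (k : nat) (E : ectx) (c : cmd) : cmd :=
  match c with
  | Pass a u =>
      if Nat.eqb a k then Pass a (fill E (ssub_tm k E u))
      else Pass a (ssub_tm k E u)
  end.

Inductive has_type : list ty -> list ty -> tm -> ty -> Prop :=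
| T_Var : forall G D n A, nth_error G n = Some A -> has_type G D (Var n) A
| T_Lam : forall G D A B b, has_type (A :: G) D b B -> has_type G D (Lam A b) (Arr A B)
| T_App : forall G D A B t s,
    has_type G D t (Arr A B) -> has_type G D s A -> has_type G D (App t s) B
| T_Zero : forall G D, has_type G D Zero TNat
| T_Suc : forall G D t, has_type G D t TNat -> has_type G D (Suc t) TNat
| T_Nrec : forall G D A r s t,
    has_type G D r A -> has_type G D s (Arr TNat (Arr A A)) -> has_type G D t TNat ->
    has_type G D (Nrec A r s t) A
| T_Mu : forall G D A c, cmd_ok G (A :: D) c -> has_type G D (Mu A c) A
with cmd_ok : list ty -> list ty -> cmd -> Prop :=
| T_Pass : forall G D a A t,
    has_type G D t A -> nth_error D a = Some A -> cmd_ok G D (Pass a t).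

Inductive step : tm -> tm -> Prop :=
| R_beta : forall A b r, step (App (Lam A b) r) (subst1 b r)
| R_muS : forall A c, step (Suc (Mu A c)) (Mu A (ssub_cmd 0 (ESuc Hole) c))
| R_muR : forall A B c s,
    step (App (Mu (Arr A B) c) s) (Mu B (ssub_cmd 0 (EApp Hole (lift_mu s)) c))
| R_muEta : forall A t, step (Mu A (Pass 0 (lift_mu t))) t
| R_rec0 : forall A r s, step (Nrec A r s Zero) r
| R_recS : forall A r s n,
    step (Nrec A r s (Suc (numeral n)))
         (App (App s (numeral n)) (Nrec A r s (numeral n)))
| R_muN : forall A B r s c,
    step (Nrec A r s (Mu B c))
         (Mu A (ssub_cmd 0 (ENrec A (lift_mu r) (lift_mu s) Hole) c))
| C_Lam : forall A b b', step b b' -> step (Lam A b) (Lam A b')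
| C_AppL : forall t t' s, step t t' -> step (App t s) (App t' s)
| C_AppR : forall t s s', step s s' -> step (App t s) (App t s')
| C_Mu : forall A c c', step_cmd c c' -> step (Mu A c) (Mu A c')
| C_Suc : forall t t', step t t' -> step (Suc t) (Suc t')
| C_NrecR : forall A r r' s t, step r r' -> step (Nrec A r s t) (Nrec A r' s t)
| C_NrecS : forall A r s s' t, step s s' -> step (Nrec A r s t) (Nrec A r s' t)
| C_NrecT : forall A r s t t', step t t' -> step (Nrec A r s t) (Nrec A r s t')
with step_cmd : cmd -> cmd -> Prop :=
| R_muI : forall a A c,
    step_cmd (Pass a (Mu A c))
             (ren_cmd (fun n => n) (fun n => match n with 0 => a | S m => m end) c)
| C_Pass : forall a t t', step t t' -> step_cmd (Pass a t) (Pass a t').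

From Stdlib Require Import List Arith Lia Relations FunctionalExtensionality Wf_nat.
From Stdlib Require Import Transitive_Closure Inverse_Image Inclusion.

(* The proof is a reducibility argument by orthogonality.  A continuation is a
   pair [(b, E)] of a mu-variable and an evaluation context, which turns a term
   [t] into the command [[b]E[t]].  Reducible continuations are defined by
   induction on types ([N]: strongly normalising (SN) on every numeral;
   [A -> B]: [E[[] u]] with [u] reducible of type [A] and [E] reducible of
   type [B]), and a term is reducible when every renaming of it, plugged into
   every reducible continuation, gives an SN command. *)

Section Accessibility.
Variables (A : Type) (R : A -> A -> Prop).

Definition sn : A -> Prop := Acc (transp A R).

Lemma sn_tc_ind (P : A -> Prop) :
  (forall x, (forall y, clos_trans A R x y -> P y) -> P x) ->
  forall x, sn x -> P x.
Proof.
  intros H x Hx. apply Acc_clos_trans in Hx.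
  induction Hx as [x _ IH]. apply H. intros y Hxy.
  apply IH, (clos_trans_transp_permute A R). exact Hxy.
Qed.

Lemma sn_tc x y : sn x -> clos_trans A R x y -> sn y.
Proof.
  intros Hx Hxy. apply (Acc_inv_trans A (transp A R) x y); auto.
  apply (clos_trans_transp_permute A R). exact Hxy.
Qed.

Lemma sn_step x y : sn x -> R x y -> sn y.
Proof. intros Hx Hxy. inversion Hx as [Hacc]. exact (Hacc y Hxy). Qed.

Lemma sn_no_chain x : sn x ->
  ~ (exists f : nat -> A, f 0 = x /\ forall n, R (f n) (f (S n))).
Proof.
  induction 1 as [x _ IH]. intros [f [Hf0 Hf]].
  apply (IH (f 1)); [rewrite <- Hf0; apply Hf|].
  exists (fun n => f (S n)). auto.
Qed.

End Accessibility.

Lemma clos_trans_map {A B} (R1 : A -> A -> Prop) (R2 : B -> B -> Prop) (f : A -> B) :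
  (forall x y, R1 x y -> R2 (f x) (f y)) ->
  forall x y, clos_trans A R1 x y -> clos_trans B R2 (f x) (f y).
Proof. intros Hf x y H. induction H; eauto using t_step, t_trans. Qed.

Lemma sn_back {A B} (R1 : A -> A -> Prop) (R2 : B -> B -> Prop) (f : A -> B) :
  (forall x y, R1 x y -> clos_trans B R2 (f x) (f y)) ->
  forall x, sn B R2 (f x) -> sn A R1 x.
Proof.
  intros Hf x Hx. apply Acc_clos_trans in Hx.
  apply (Acc_incl _ _ (fun a b => clos_trans B (transp B R2) (f a) (f b))).
  - intros a b Hab. apply (clos_trans_transp_permute B R2), Hf. exact Hab.
  - apply Acc_inverse_image. exact Hx.
Qed.

Lemma clos_refl_trans_map {A B} (R1 : A -> A -> Prop) (R2 : B -> B -> Prop) (f : A -> B) :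
  (forall x y, R1 x y -> R2 (f x) (f y)) ->
  forall x y, clos_refl_trans A R1 x y -> clos_refl_trans B R2 (f x) (f y).
Proof. intros Hf x y H. induction H; eauto using rt_step, rt_trans, rt_refl. Qed.

Lemma clos_refl_trans_cases {A} (R : A -> A -> Prop) x y :
  clos_refl_trans A R x y -> x = y \/ clos_trans A R x y.
Proof.
  intros H. apply clos_rt_rtn1 in H. destruct H as [|y z Hyz Hxy]; [auto|right].
  apply clos_rt_t with y; [apply clos_rtn1_rt; exact Hxy | apply t_step; exact Hyz].
Qed.

Scheme tm_mut := Induction for tm Sort Prop
with cmd_mut := Induction for cmd Sort Prop.
Combined Scheme tm_cmd_mut from tm_mut, cmd_mut.

(* Relaxed reduction: the official reduction except that rule (muR) fires for
   [(mu alpha:A. c) s] whatever the annotation [A], with an arbitrary annotation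
   on the result.  Generalised substitution (below) builds such redexes without
   tracking types, so SN is proved for this larger relation. *)
Inductive rstep : tm -> tm -> Prop :=
| S_beta : forall A b r, rstep (App (Lam A b) r) (subst1 b r)
| S_muS : forall A c, rstep (Suc (Mu A c)) (Mu A (ssub_cmd 0 (ESuc Hole) c))
| S_muR : forall A B c s,
    rstep (App (Mu A c) s) (Mu B (ssub_cmd 0 (EApp Hole (lift_mu s)) c))
| S_muEta : forall A t, rstep (Mu A (Pass 0 (lift_mu t))) t
| S_rec0 : forall A r s, rstep (Nrec A r s Zero) r
| S_recS : forall A r s n,
    rstep (Nrec A r s (Suc (numeral n)))
          (App (App s (numeral n)) (Nrec A r s (numeral n)))
| S_muN : forall A B r s c,
    rstep (Nrec A r s (Mu B c))
          (Mu A (ssub_cmd 0 (ENrec A (lift_mu r) (lift_mu s) Hole) c))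
| SC_Lam : forall A b b', rstep b b' -> rstep (Lam A b) (Lam A b')
| SC_AppL : forall t t' s, rstep t t' -> rstep (App t s) (App t' s)
| SC_AppR : forall t s s', rstep s s' -> rstep (App t s) (App t s')
| SC_Mu : forall A c c', rstep_cmd c c' -> rstep (Mu A c) (Mu A c')
| SC_Suc : forall t t', rstep t t' -> rstep (Suc t) (Suc t')
| SC_NrecR : forall A r r' s t, rstep r r' -> rstep (Nrec A r s t) (Nrec A r' s t)
| SC_NrecS : forall A r s s' t, rstep s s' -> rstep (Nrec A r s t) (Nrec A r s' t)
| SC_NrecT : forall A r s t t', rstep t t' -> rstep (Nrec A r s t) (Nrec A r s t')
with rstep_cmd : cmd -> cmd -> Prop :=
| S_muI : forall a A c,
    rstep_cmd (Pass a (Mu A c))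
              (ren_cmd (fun n => n) (fun n => match n with 0 => a | S m => m end) c)
| SC_Pass : forall a t t', rstep t t' -> rstep_cmd (Pass a t) (Pass a t').

Scheme rstep_mut := Induction for rstep Sort Prop
with rstep_cmd_mut := Induction for rstep_cmd Sort Prop.
Combined Scheme rstep_both from rstep_mut, rstep_cmd_mut.
Scheme step_mut := Induction for step Sort Prop
with step_cmd_mut := Induction for step_cmd Sort Prop.
Combined Scheme step_both from step_mut, step_cmd_mut.

Lemma step_rstep :
  (forall t t', step t t' -> rstep t t') /\ (forall c c', step_cmd c c' -> rstep_cmd c c').
Proof. apply step_both; intros; econstructor; eauto. Qed.

Inductive rstep_ctx : ectx -> ectx -> Prop :=
| SE_AppL : forall E E' t, rstep_ctx E E' -> rstep_ctx (EApp E t) (EApp E' t)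
| SE_AppR : forall E t t', rstep t t' -> rstep_ctx (EApp E t) (EApp E t')
| SE_Suc : forall E E', rstep_ctx E E' -> rstep_ctx (ESuc E) (ESuc E')
| SE_NrecR : forall A r r' s E, rstep r r' -> rstep_ctx (ENrec A r s E) (ENrec A r' s E)
| SE_NrecS : forall A r s s' E, rstep s s' -> rstep_ctx (ENrec A r s E) (ENrec A r s' E)
| SE_NrecE : forall A r s E E', rstep_ctx E E' -> rstep_ctx (ENrec A r s E) (ENrec A r s E').

Definition SN : tm -> Prop := sn tm rstep.
Definition SNc : cmd -> Prop := sn cmd rstep_cmd.
Definition SNE : ectx -> Prop := sn ectx rstep_ctx.

Fixpoint ecomp (E1 E2 : ectx) : ectx :=
  match E1 with
  | Hole => E2
  | EApp E t => EApp (ecomp E E2) t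
  | ESuc E => ESuc (ecomp E E2)
  | ENrec A r s E => ENrec A r s (ecomp E E2)
  end.

(* Depth of a context, the measure for the mu-expansion lemma. *)
Fixpoint esize (E : ectx) : nat :=
  match E with
  | Hole => 0
  | EApp E _ => S (esize E)
  | ESuc E => S (esize E)
  | ENrec _ _ _ E => S (esize E)
  end.

Lemma fill_ecomp : forall E1 E2 t, fill (ecomp E1 E2) t = fill E1 (fill E2 t).
Proof. induction E1; simpl; intros; congruence. Qed.

Lemma ecomp_Hole_r : forall E, ecomp E Hole = E.
Proof. induction E; simpl; congruence. Qed.

Lemma ren_fill : forall xi zeta E t,
  ren_tm xi zeta (fill E t) = fill (ren_ectx xi zeta E) (ren_tm xi zeta t).
Proof. induction E; simpl; intros; congruence. Qed.

Lemma ren_ecomp : forall xi zeta E1 E2,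
  ren_ectx xi zeta (ecomp E1 E2) = ecomp (ren_ectx xi zeta E1) (ren_ectx xi zeta E2).
Proof. induction E1; simpl; intros; congruence. Qed.

Lemma ren_numeral : forall xi zeta n, ren_tm xi zeta (numeral n) = numeral n.
Proof. induction n; simpl; congruence. Qed.

Ltac fext := apply functional_extensionality; intros.

Lemma ren_ren :
  (forall t xi zeta xi' zeta', ren_tm xi zeta (ren_tm xi' zeta' t)
     = ren_tm (fun n => xi (xi' n)) (fun n => zeta (zeta' n)) t) /\
  (forall c xi zeta xi' zeta', ren_cmd xi zeta (ren_cmd xi' zeta' c)
     = ren_cmd (fun n => xi (xi' n)) (fun n => zeta (zeta' n)) c).
Proof.
  apply tm_cmd_mut; intros; simpl; rewrite ?H, ?H0, ?H1; try reflexivity;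
  f_equal; f_equal; fext; destruct x; reflexivity.
Qed.

Lemma ren_ren_ctx : forall E xi zeta xi' zeta', ren_ectx xi zeta (ren_ectx xi' zeta' E)
     = ren_ectx (fun n => xi (xi' n)) (fun n => zeta (zeta' n)) E.
Proof. induction E; simpl; intros; rewrite ?IHE, ?(proj1 ren_ren); reflexivity. Qed.

Lemma ren_id :
  (forall t, ren_tm (fun n => n) (fun n => n) t = t) /\
  (forall c, ren_cmd (fun n => n) (fun n => n) c = c).
Proof.
  assert (E : up (fun n => n) = (fun n : nat => n)) by (fext; destruct x; auto).
  apply tm_cmd_mut; intros; simpl; rewrite ?E, ?H, ?H0, ?H1; try reflexivity.
Qed.

Lemma ren_id_ctx : forall E, ren_ectx (fun n => n) (fun n => n) E = E.
Proof. induction E; simpl; rewrite ?IHE, ?(proj1 ren_id); reflexivity. Qed.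

(* A continuation substitution sends the mu-variable [a] to a pair [(b, E)]:
   each command [[a]u] becomes [[b]E[u]].  Together with a lambda-substitution
   it gives the generalised substitution [gsub], which covers ordinary
   substitution, renaming, structural substitution and the (mu i) rule. *)
Definition csub : Type := nat -> nat * ectx.

Definition csub_lam (th : csub) : csub :=
  fun a => (fst (th a), ren_ectx S (fun n => n) (snd (th a))).

Definition csub_up (th : csub) : csub :=
  fun a => match a with
           | 0 => (0, Hole)
           | S m => (S (fst (th m)), ren_ectx (fun n => n) S (snd (th m)))
           end.

Fixpoint gsub (sg : nat -> tm) (th : csub) (t : tm) : tm :=
  match t with
  | Var n => sg n
  | Lam A b => Lam A (gsub (up_sub sg) (csub_lam th) b)
  | App a b => App (gsub sg th a) (gsub sg th b)
  | Mu A c => Mu A (gsub_cmd (fun n => lift_mu (sg n)) (csub_up th) c)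
  | Zero => Zero
  | Suc a => Suc (gsub sg th a)
  | Nrec A r s u => Nrec A (gsub sg th r) (gsub sg th s) (gsub sg th u)
  end
with gsub_cmd (sg : nat -> tm) (th : csub) (c : cmd) : cmd :=
  match c with
  | Pass a u => Pass (fst (th a)) (fill (snd (th a)) (gsub sg th u))
  end.

Fixpoint gsub_ctx (sg : nat -> tm) (th : csub) (E : ectx) : ectx :=
  match E with
  | Hole => Hole
  | EApp E t => EApp (gsub_ctx sg th E) (gsub sg th t)
  | ESuc E => ESuc (gsub_ctx sg th E)
  | ENrec A r s E => ENrec A (gsub sg th r) (gsub sg th s) (gsub_ctx sg th E)
  end.

Definition csub_id : csub := fun a => (a, Hole).

Definition csub_ren (xi zeta : nat -> nat) (th : csub) : csub :=
  fun a => (zeta (fst (th a)), ren_ectx xi zeta (snd (th a))).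

Definition csub_comp (th th' : csub) (sg' : nat -> tm) : csub :=
  fun a => (fst (th' (fst (th a))),
            ecomp (snd (th' (fst (th a)))) (gsub_ctx sg' th' (snd (th a)))).

Definition csub_at (k : nat) (E : ectx) : csub :=
  fun a => if Nat.eqb a k then (a, E) else (a, Hole).

(* Instantiate mu-index 0 by [(b, E)] and shift the others down: the effect on
   the body [c] of reducing [[b]E[mu alpha. c]] to a command. *)
Definition csub_pop (b : nat) (E : ectx) : csub :=
  fun a => match a with 0 => (b, E) | S m => (m, Hole) end.

Definition ren_pop (a : nat) : nat -> nat :=
  fun n => match n with 0 => a | S m => m end.

Definition sub_single (r : tm) : nat -> tm :=
  fun n => match n with 0 => r | S m => Var m end.

Lemma gsub_fill : forall sg th E t,
  gsub sg th (fill E t) = fill (gsub_ctx sg th E) (gsub sg th t).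
Proof. induction E; simpl; intros; congruence. Qed.

Lemma gsub_numeral : forall sg th n, gsub sg th (numeral n) = numeral n.
Proof. induction n; simpl; congruence. Qed.

Lemma gsub_ren :
  (forall t sg th xi zeta, gsub sg th (ren_tm xi zeta t)
     = gsub (fun n => sg (xi n)) (fun a => th (zeta a)) t) /\
  (forall c sg th xi zeta, gsub_cmd sg th (ren_cmd xi zeta c)
     = gsub_cmd (fun n => sg (xi n)) (fun a => th (zeta a)) c).
Proof.
  apply tm_cmd_mut; intros; simpl; rewrite ?H, ?H0, ?H1; try reflexivity;
  f_equal; f_equal; fext; destruct x; reflexivity.
Qed.

Lemma gsub_ctx_ren : forall E sg th xi zeta, gsub_ctx sg th (ren_ectx xi zeta E)
     = gsub_ctx (fun n => sg (xi n)) (fun a => th (zeta a)) E.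
Proof. induction E; simpl; intros; rewrite ?IHE, ?(proj1 gsub_ren); reflexivity. Qed.

Lemma ren_gsub :
  (forall t sg th xi zeta, ren_tm xi zeta (gsub sg th t)
     = gsub (fun n => ren_tm xi zeta (sg n)) (csub_ren xi zeta th) t) /\
  (forall c sg th xi zeta, ren_cmd xi zeta (gsub_cmd sg th c)
     = gsub_cmd (fun n => ren_tm xi zeta (sg n)) (csub_ren xi zeta th) c).
Proof.
  apply tm_cmd_mut; intros; simpl; rewrite ?H, ?H0, ?H1; try reflexivity.
  - f_equal; f_equal; fext.
    + destruct x; simpl; [reflexivity|]. unfold lift_lam. rewrite !(proj1 ren_ren). reflexivity.
    + unfold csub_ren, csub_lam; simpl. rewrite !ren_ren_ctx. reflexivity.
  - f_equal; f_equal; fext.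
    + unfold lift_mu. rewrite !(proj1 ren_ren). reflexivity.
    + unfold csub_ren, csub_up; destruct x; simpl; [reflexivity|]. rewrite !ren_ren_ctx. reflexivity.
  - rewrite ren_fill, H. reflexivity.
Qed.

Lemma ren_gsub_ctx : forall E sg th xi zeta, ren_ectx xi zeta (gsub_ctx sg th E)
     = gsub_ctx (fun n => ren_tm xi zeta (sg n)) (csub_ren xi zeta th) E.
Proof. induction E; simpl; intros; rewrite ?IHE, ?(proj1 ren_gsub); reflexivity. Qed.

Lemma ren_as_gsub :
  (forall t xi zeta, ren_tm xi zeta t = gsub (fun n => Var (xi n)) (fun a => (zeta a, Hole)) t) /\
  (forall c xi zeta, ren_cmd xi zeta c = gsub_cmd (fun n => Var (xi n)) (fun a => (zeta a, Hole)) c).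
Proof.
  apply tm_cmd_mut; intros; simpl; rewrite ?H, ?H0, ?H1; try reflexivity;
  f_equal; f_equal; fext; destruct x; reflexivity.
Qed.

Lemma ren_as_gsub_ctx : forall E xi zeta,
  ren_ectx xi zeta E = gsub_ctx (fun n => Var (xi n)) (fun a => (zeta a, Hole)) E.
Proof. induction E; simpl; intros; rewrite ?IHE, <- ?(proj1 ren_as_gsub); reflexivity. Qed.

Lemma gsub_id : forall t, gsub Var csub_id t = t.
Proof.
  intros t. pose proof (proj1 ren_as_gsub t (fun n => n) (fun n => n)) as H.
  rewrite (proj1 ren_id) in H. symmetry. exact H.
Qed.

Lemma gsub_ctx_id : forall E sg th,
  (forall n, sg n = Var n) -> (forall a, th a = (a, Hole)) -> gsub_ctx sg th E = E.
Proof.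
  intros E sg th Hsg Hth.
  replace sg with Var by (symmetry; fext; auto).
  replace th with csub_id by (symmetry; fext; auto).
  pose proof (ren_as_gsub_ctx E (fun n => n) (fun n => n)) as H.
  rewrite ren_id_ctx in H. symmetry. exact H.
Qed.

Lemma gsub_gsub :
  (forall t sg th sg' th', gsub sg' th' (gsub sg th t)
     = gsub (fun n => gsub sg' th' (sg n)) (csub_comp th th' sg') t) /\
  (forall c sg th sg' th', gsub_cmd sg' th' (gsub_cmd sg th c)
     = gsub_cmd (fun n => gsub sg' th' (sg n)) (csub_comp th th' sg') c).
Proof.
  apply tm_cmd_mut; intros; simpl; rewrite ?H, ?H0, ?H1; try reflexivity.
  - f_equal; f_equal; fext.
    + destruct x; simpl; [reflexivity|]. unfold lift_lam.
      rewrite (proj1 gsub_ren), (proj1 ren_gsub). reflexivity.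
    + unfold csub_comp, csub_lam; simpl. rewrite ren_ecomp, gsub_ctx_ren, ren_gsub_ctx. reflexivity.
  - f_equal; f_equal; fext.
    + unfold lift_mu. rewrite (proj1 gsub_ren), (proj1 ren_gsub). reflexivity.
    + unfold csub_comp, csub_up; destruct x; simpl; [reflexivity|].
      rewrite ren_ecomp, gsub_ctx_ren, ren_gsub_ctx. reflexivity.
  - rewrite gsub_fill, H, fill_ecomp. reflexivity.
Qed.

Lemma subst_as_gsub :
  (forall t sg, subst_tm sg t = gsub sg csub_id t) /\
  (forall c sg, subst_cmd sg c = gsub_cmd sg csub_id c).
Proof.
  apply tm_cmd_mut; intros; simpl; rewrite ?H, ?H0, ?H1; try reflexivity.
  f_equal; f_equal; fext; destruct x; reflexivity.
Qed.

Lemma subst1_as_gsub : forall t r, subst1 t r = gsub (sub_single r) csub_id t.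
Proof. intros. unfold subst1. rewrite (proj1 subst_as_gsub). reflexivity. Qed.

Lemma ssub_as_gsub :
  (forall t k E, ssub_tm k E t = gsub Var (csub_at k E) t) /\
  (forall c k E, ssub_cmd k E c = gsub_cmd Var (csub_at k E) c).
Proof.
  apply tm_cmd_mut; intros; simpl; rewrite ?H, ?H0, ?H1; try reflexivity.
  - f_equal; f_equal; fext.
    + destruct x; reflexivity.
    + unfold csub_lam, csub_at. destruct (Nat.eqb x k); reflexivity.
  - f_equal; f_equal; fext.
    unfold csub_up, csub_at. destruct x; simpl; [reflexivity|]. destruct (Nat.eqb x k); reflexivity.
  - unfold csub_at. destruct (Nat.eqb n k); reflexivity.
Qed.

Lemma ren_pop_as_gsub : forall b c,
  ren_cmd (fun n => n) (ren_pop b) c = gsub_cmd Var (csub_pop b Hole) c.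
Proof. intros. rewrite (proj2 ren_as_gsub). f_equal; fext; destruct x; reflexivity. Qed.

Lemma gsub_pop_lift : forall b E s, gsub Var (csub_pop b E) (lift_mu s) = s.
Proof. intros. unfold lift_mu. rewrite (proj1 gsub_ren). exact (gsub_id s). Qed.

Lemma gsub_lift_mu : forall sg th t,
  gsub (fun n => lift_mu (sg n)) (csub_up th) (lift_mu t) = lift_mu (gsub sg th t).
Proof. intros. unfold lift_mu at 2 3. rewrite (proj1 gsub_ren), (proj1 ren_gsub). reflexivity. Qed.

Lemma gsub_subst1 : forall sg th b r,
  gsub sg th (subst1 b r) = subst1 (gsub (up_sub sg) (csub_lam th) b) (gsub sg th r).
Proof.
  intros. rewrite !subst1_as_gsub, !(proj1 gsub_gsub). f_equal; fext.
  - destruct x; simpl; [reflexivity|]. unfold lift_lam.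
    rewrite (proj1 gsub_ren). symmetry. exact (gsub_id _).
  - unfold csub_comp, csub_id, csub_lam; simpl. rewrite ecomp_Hole_r, gsub_ctx_ren. f_equal.
    symmetry. apply gsub_ctx_id; reflexivity.
Qed.

Lemma gsub_cmd_ssub : forall sg th F c,
  gsub_cmd (fun n => lift_mu (sg n)) (csub_up th) (ssub_cmd 0 (ren_ectx (fun n => n) S F) c)
  = ssub_cmd 0 (ren_ectx (fun n => n) S (gsub_ctx sg th F))
             (gsub_cmd (fun n => lift_mu (sg n)) (csub_up th) c).
Proof.
  intros. rewrite !(proj2 ssub_as_gsub), !(proj2 gsub_gsub). f_equal; fext.
  - simpl. unfold lift_mu. rewrite (proj1 gsub_ren), (proj1 ren_as_gsub). reflexivity.
  - unfold csub_comp, csub_at; destruct x; simpl.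
    + rewrite ?ecomp_Hole_r, gsub_ctx_ren, ren_gsub_ctx. reflexivity.
    + rewrite ?ecomp_Hole_r, gsub_ctx_ren, (ren_as_gsub_ctx (snd (th x))). reflexivity.
Qed.

Lemma gsub_cmd_pop : forall sg th a c,
  gsub_cmd Var (csub_pop (fst (th a)) (snd (th a)))
           (gsub_cmd (fun n => lift_mu (sg n)) (csub_up th) c)
  = gsub_cmd sg th (ren_cmd (fun n => n) (ren_pop a) c).
Proof.
  intros. rewrite (proj2 gsub_gsub), (proj2 gsub_ren). f_equal; fext.
  - rewrite gsub_pop_lift. reflexivity.
  - unfold csub_comp, csub_up, csub_pop; destruct x; simpl.
    + rewrite ecomp_Hole_r. destruct (th a); reflexivity.
    + rewrite gsub_ctx_ren, gsub_ctx_id by reflexivity. destruct (th x); reflexivity.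
Qed.

(* A structural substitution by a frame [F] followed by [csub_pop b E] is
   [csub_pop b (E F)]: the head mu absorbs its context one frame at a time. *)
Lemma csub_pop_ssub : forall b E F c,
  gsub_cmd Var (csub_pop b E) (ssub_cmd 0 (ren_ectx (fun n => n) S F) c)
  = gsub_cmd Var (csub_pop b (ecomp E F)) c.
Proof.
  intros. rewrite (proj2 ssub_as_gsub), (proj2 gsub_gsub). f_equal; fext.
  unfold csub_comp, csub_at, csub_pop; destruct x; simpl; [|reflexivity].
  rewrite gsub_ctx_ren, gsub_ctx_id by reflexivity. reflexivity.
Qed.

Lemma subst1_ren_gsub : forall xi zeta sg th b u,
  subst1 (ren_tm (up xi) zeta (gsub (up_sub sg) (csub_lam th) b)) u
  = gsub (fun n => match n with 0 => u | S m => ren_tm xi zeta (sg m) end)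
         (csub_ren xi zeta th) b.
Proof.
  intros. rewrite subst1_as_gsub, (proj1 ren_gsub), (proj1 gsub_gsub). f_equal; fext.
  - destruct x; simpl; [reflexivity|]. unfold lift_lam. rewrite (proj1 ren_ren).
    rewrite (proj1 gsub_ren), (proj1 ren_as_gsub). reflexivity.
  - unfold csub_comp, csub_ren, csub_lam, csub_id; simpl. rewrite ren_ren_ctx, gsub_ctx_ren.
    rewrite (ren_as_gsub_ctx _ xi zeta). reflexivity.
Qed.

Lemma pop_ren_gsub_cmd : forall xi zeta sg th b E c,
  gsub_cmd Var (csub_pop b E)
           (ren_cmd xi (up zeta) (gsub_cmd (fun n => lift_mu (sg n)) (csub_up th) c))
  = gsub_cmd (fun n => ren_tm xi zeta (sg n))
             (fun a => match a with 0 => (b, E) | S m => csub_ren xi zeta th m end) c.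
Proof.
  intros. rewrite (proj2 ren_gsub), (proj2 gsub_gsub). f_equal; fext.
  - unfold lift_mu. rewrite (proj1 ren_ren), (proj1 gsub_ren), (proj1 ren_as_gsub). reflexivity.
  - unfold csub_comp, csub_ren, csub_up, csub_pop; destruct x; simpl.
    + rewrite ecomp_Hole_r. reflexivity.
    + rewrite ren_ren_ctx, gsub_ctx_ren. rewrite (ren_as_gsub_ctx _ xi zeta). reflexivity.
Qed.

Lemma rstep_fill : forall E t t', rstep t t' -> rstep (fill E t) (fill E t').
Proof. induction E; simpl; intros; try constructor; auto. Qed.

Lemma rstep_fill_ctx : forall E E' t, rstep_ctx E E' -> rstep (fill E t) (fill E' t).
Proof. intros E E' t H; induction H; simpl; constructor; auto. Qed.

Lemma rstep_cmd_fill : forall b E t t',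
  rstep t t' -> rstep_cmd (Pass b (fill E t)) (Pass b (fill E t')).
Proof. intros. constructor. apply rstep_fill. assumption. Qed.

Definition frame (F : ectx) : Prop :=
  (exists v, F = EApp Hole v) \/ F = ESuc Hole \/ (exists A r s, F = ENrec A r s Hole).

Lemma ectx_last_frame : forall E, E = Hole \/
  exists E1 F, E = ecomp E1 F /\ esize E1 < esize E /\ frame F.
Proof.
  induction E as [| E IHE t | E IHE | A r s E IHE]; [left; reflexivity | right..];
    destruct IHE as [->|[E1 [F [-> [Hs Hf]]]]].
  - exists Hole, (EApp Hole t). repeat split; [simpl; lia | left; eauto].
  - exists (EApp E1 t), F. repeat split; [simpl; lia | exact Hf].
  - exists Hole, (ESuc Hole). repeat split; [simpl; lia | right; left; auto].
  - exists (ESuc E1), F. repeat split; [simpl; lia | exact Hf].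
  - exists Hole, (ENrec A r s Hole). repeat split; [simpl; lia | right; right; eauto].
  - exists (ENrec A r s E1), F. repeat split; [simpl; lia | exact Hf].
Qed.

(* A mu in a frame reduces by (muR), (muS) or (muN); here the relaxed (muR) is
   needed since the annotation of the mu is arbitrary. *)
Lemma rstep_frame_mu : forall F A X, frame F -> exists A',
  rstep (fill F (Mu A X)) (Mu A' (ssub_cmd 0 (ren_ectx (fun n => n) S F) X)).
Proof.
  intros F A X [[v ->]|[->|[A0 [r [s ->]]]]]; simpl.
  - exists A. apply (S_muR A A X v).
  - exists A. apply S_muS.
  - exists A0. apply S_muN.
Qed.

(* [[b]E[mu alpha. X]] reduces in at least one step to [X] with [alpha]
   instantiated by [(b, E)]: the mu swallows [E] frame by frame, then (mu i). *)
Lemma rstep_cmd_mu_spine : forall E X A b,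
  clos_trans cmd rstep_cmd (Pass b (fill E (Mu A X))) (gsub_cmd Var (csub_pop b E) X).
Proof.
  intros E. remember (esize E) as n eqn:Hn. revert E Hn.
  induction n as [n IH] using lt_wf_ind. intros E Hn X A b.
  destruct (ectx_last_frame E) as [->|[E1 [F [-> [Hlt Hf]]]]].
  - apply t_step. rewrite <- ren_pop_as_gsub. apply S_muI.
  - destruct (rstep_frame_mu F A X Hf) as [A' Hst].
    apply t_trans with (Pass b (fill E1 (Mu A' (ssub_cmd 0 (ren_ectx (fun n => n) S F) X)))).
    + apply t_step. rewrite fill_ecomp. apply rstep_cmd_fill. exact Hst.
    + rewrite <- csub_pop_ssub. apply (IH (esize E1)); [lia | reflexivity].
Qed.

Ltac congruence_tc R f :=
  apply (clos_trans_map R _ f); [intros; constructor; assumption | auto].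

(* The only non-local case is (mu i), where the substituted
   context has to be absorbed by [rstep_cmd_mu_spine]. *)
Lemma rstep_gsub :
  (forall t t', rstep t t' -> forall sg th,
     clos_trans tm rstep (gsub sg th t) (gsub sg th t')) /\
  (forall c c', rstep_cmd c c' -> forall sg th,
     clos_trans cmd rstep_cmd (gsub_cmd sg th c) (gsub_cmd sg th c')).
Proof.
  apply rstep_both; intros; simpl.
  - apply t_step. rewrite gsub_subst1. apply S_beta.
  - apply t_step. pose proof (gsub_cmd_ssub sg th (ESuc Hole) c) as Hc; simpl in Hc.
    unfold lift_mu in Hc |- *. rewrite Hc. apply S_muS.
  - apply t_step. pose proof (gsub_cmd_ssub sg th (EApp Hole s) c) as Hc; simpl in Hc.
    unfold lift_mu in Hc |- *. rewrite Hc. apply S_muR.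
  - apply t_step. rewrite gsub_lift_mu. apply S_muEta.
  - apply t_step. apply S_rec0.
  - apply t_step. rewrite gsub_numeral. apply S_recS.
  - apply t_step. pose proof (gsub_cmd_ssub sg th (ENrec A r s Hole) c) as Hc; simpl in Hc.
    unfold lift_mu in Hc |- *. rewrite Hc. apply S_muN.
  - congruence_tc rstep (Lam A).
  - congruence_tc rstep (fun x => App x (gsub sg th s)).
  - congruence_tc rstep (fun x => App (gsub sg th t) x).
  - congruence_tc rstep_cmd (Mu A).
  - congruence_tc rstep Suc.
  - congruence_tc rstep (fun x => Nrec A x (gsub sg th s) (gsub sg th t)).
  - congruence_tc rstep (fun x => Nrec A (gsub sg th r) x (gsub sg th t)).
  - congruence_tc rstep (fun x => Nrec A (gsub sg th r) (gsub sg th s) x).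
  - change (fun n : nat => match n with 0 => a | S m => m end) with (ren_pop a).
    rewrite <- (gsub_cmd_pop sg th a c). apply rstep_cmd_mu_spine.
  - apply (clos_trans_map rstep _ (fun x => Pass (fst (th a)) (fill (snd (th a)) x)));
      [intros; apply rstep_cmd_fill; assumption | auto].
Qed.

Lemma rstep_ren : forall xi zeta t t', rstep t t' ->
  clos_trans tm rstep (ren_tm xi zeta t) (ren_tm xi zeta t').
Proof. intros. rewrite !(proj1 ren_as_gsub). apply rstep_gsub; auto. Qed.

Lemma rstep_subst1 : forall b b' r, rstep b b' ->
  clos_trans tm rstep (subst1 b r) (subst1 b' r).
Proof. intros. rewrite !subst1_as_gsub. apply rstep_gsub; auto. Qed.

Lemma SN_gsub_inv : forall sg th t, SN (gsub sg th t) -> SN t.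
Proof. intros sg th. apply sn_back. intros. apply rstep_gsub; auto. Qed.

Lemma SN_fill_inv : forall E t, SN (fill E t) -> SN t.
Proof. intros E. apply sn_back. intros. apply t_step, rstep_fill; auto. Qed.

Lemma SNE_fill_inv : forall E t, SN (fill E t) -> SNE E.
Proof.
  intros E t. apply (sn_back _ _ (fun E => fill E t)).
  intros. apply t_step, rstep_fill_ctx; auto.
Qed.

Lemma SNc_Pass_inv : forall b t, SNc (Pass b t) -> SN t.
Proof. intros b. apply sn_back. intros. apply t_step. constructor; auto. Qed.

(* Neutral terms: no context can create a redex with them at its hole. *)
Definition neutral (h : tm) : Prop :=
  match h with Lam _ _ | Mu _ _ | Zero | Suc _ => False | _ => True end.

Lemma fill_Lam : forall E h A b, fill E h = Lam A b -> E = Hole /\ h = Lam A b.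
Proof. destruct E; simpl; intros; try discriminate; auto. Qed.

Lemma fill_Mu : forall E h A c, fill E h = Mu A c -> E = Hole /\ h = Mu A c.
Proof. destruct E; simpl; intros; try discriminate; auto. Qed.

Lemma fill_num : forall E h n, fill E h = numeral n -> exists m, h = numeral m.
Proof.
  induction E; simpl; intros h n H.
  - eauto.
  - destruct n; discriminate.
  - destruct n; [discriminate|]. simpl in H. inversion H. eauto.
  - destruct n; discriminate.
Qed.

Lemma numeral_normal : forall n t, rstep (numeral n) t -> False.
Proof. induction n; simpl; intros t H; inversion H; subst; eauto; destruct n; discriminate. Qed.

Lemma numeral_not_neutral : forall m, neutral (numeral m) -> False.
Proof. destruct m; simpl; auto. Qed.

Lemma rstep_cmd_Pass_inv : forall b u c', rstep_cmd (Pass b u) c' ->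
  (exists u', rstep u u' /\ c' = Pass b u') \/
  (exists A c, u = Mu A c /\ c' = ren_cmd (fun n => n) (ren_pop b) c).
Proof. intros. inversion H; subst; eauto. Qed.

(* Discards the cases where a root redex would need a non-neutral hole. *)
Ltac fill_contra :=
  match goal with
  | H : fill _ _ = Lam _ _ |- _ => apply fill_Lam in H; destruct H; subst; simpl in *; try contradiction; try discriminate
  | H : Lam _ _ = fill _ _ |- _ => symmetry in H; fill_contra
  | H : fill _ _ = Mu _ _ |- _ => apply fill_Mu in H; destruct H; subst; simpl in *; try contradiction; try discriminate
  | H : Mu _ _ = fill _ _ |- _ => symmetry in H; fill_contra
  | H : fill _ _ = Zero |- _ => let m := fresh "m" in let Hm := fresh "Hm" in
      apply (fill_num _ _ 0) in H; destruct H as [m Hm];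
      first [ (subst; exfalso; eapply numeral_not_neutral; eassumption) | (destruct m; discriminate) ]
  | H : Zero = fill _ _ |- _ => symmetry in H; fill_contra
  | H : fill _ _ = Suc (numeral ?n) |- _ => let m := fresh "m" in let Hm := fresh "Hm" in
      apply (fill_num _ _ (S n)) in H; destruct H as [m Hm];
      first [ (subst; exfalso; eapply numeral_not_neutral; eassumption) | (destruct m; discriminate) ]
  | H : Suc (numeral _) = fill _ _ |- _ => symmetry in H; fill_contra
  end.

Lemma rstep_fill_neutral : forall E h t', neutral h -> rstep (fill E h) t' ->
  (exists h', rstep h h' /\ t' = fill E h') \/ (exists E', rstep_ctx E E' /\ t' = fill E' h).
Proof.
  induction E; simpl; intros h t' Hn H.
  - left; eauto.
  - remember (fill E h) as u. inversion H; subst; try fill_contra.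
    + destruct (IHE h t'0 Hn H3) as [[h' [Hh ->]]|[E' [HE ->]]].
      * left; eauto.
      * right; exists (EApp E' t); split; auto. constructor; auto.
    + right; exists (EApp E s'); split; auto. constructor; auto.
  - remember (fill E h) as u. inversion H; subst; try fill_contra.
    + destruct (IHE h t'0 Hn H1) as [[h' [Hh ->]]|[E' [HE ->]]].
      * left; eauto.
      * right; exists (ESuc E'); split; auto. constructor; auto.
  - remember (fill E h) as u. inversion H; subst; try fill_contra.
    + right; eexists; split; [apply SE_NrecR; eauto|]; auto.
    + right; eexists; split; [apply SE_NrecS; eauto|]; auto.
    + destruct (IHE h t'0 Hn H5) as [[h' [Hh ->]]|[E' [HE ->]]].
      * left; eauto.
      * right; exists (ENrec t t0 t1 E'); split; auto. constructor; auto.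
Qed.

Lemma rstep_fill_mu : forall E A c t', rstep (fill E (Mu A c)) t' ->
  (exists h', rstep (Mu A c) h' /\ t' = fill E h') \/
  (exists E', rstep_ctx E E' /\ t' = fill E' (Mu A c)) \/
  (exists E1 F B, E = ecomp E1 F /\ esize E1 < esize E /\
     t' = fill E1 (Mu B (ssub_cmd 0 (ren_ectx (fun n => n) S F) c))).
Proof.
  induction E; simpl; intros A c t' H.
  - left; eauto.
  - remember (fill E (Mu A c)) as u. inversion H; subst; repeat match goal with HH : ?x = fill ?E ?h |- _ => symmetry in HH end.
    + apply fill_Lam in H1. destruct H1; subst; discriminate.
    + apply fill_Mu in H1. destruct H1 as [-> HH]. inversion HH; subst.
      right; right. exists Hole, (EApp Hole t), B. simpl. repeat split; auto.
    + destruct (IHE A c t'0 H3) as [[h' [Hh ->]]|[[E' [HE ->]]|[E1 [F [B [-> [Hs ->]]]]]]].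
      * left; eauto.
      * right; left; exists (EApp E' t); split; auto. constructor; auto.
      * right; right; exists (EApp E1 t), F, B. simpl. repeat split; auto. lia.
    + right; left; exists (EApp E s'); split; auto. constructor; auto.
  - remember (fill E (Mu A c)) as u. inversion H; subst; repeat match goal with HH : ?x = fill ?E ?h |- _ => symmetry in HH end.
    + apply fill_Mu in H1. destruct H1 as [-> HH]. inversion HH; subst.
      right; right. exists Hole, (ESuc Hole); eexists. simpl. repeat split; auto.
    + destruct (IHE A c t'0 H1) as [[h' [Hh ->]]|[[E' [HE ->]]|[E1 [F [B [-> [Hs ->]]]]]]].
      * left; eauto.
      * right; left; exists (ESuc E'); split; auto. constructor; auto.
      * right; right; exists (ESuc E1), F, B. simpl. repeat split; auto. lia.
  - remember (fill E (Mu A c)) as u. inversion H; subst; repeat match goal with HH : ?x = fill ?E ?h |- _ => symmetry in HH end.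
    + apply (fill_num _ _ 0) in H4. destruct H4 as [m Hm]; destruct m; discriminate.
    + apply (fill_num _ _ (S n)) in H4. destruct H4 as [m Hm]; destruct m; discriminate.
    + apply fill_Mu in H4. destruct H4 as [-> HH]. inversion HH; subst.
      right; right. exists Hole, (ENrec t t0 t1 Hole), t. simpl. repeat split; auto.
    + right; left; eexists; split; [apply SE_NrecR; eauto|]; auto.
    + right; left; eexists; split; [apply SE_NrecS; eauto|]; auto.
    + destruct (IHE A c t'0 H5) as [[h' [Hh ->]]|[[E' [HE ->]]|[E1 [F [B [-> [Hs ->]]]]]]].
      * left; eauto.
      * right; left; exists (ENrec t t0 t1 E'); split; auto. constructor; auto.
      * right; right; exists (ENrec t t0 t1 E1), F, B. simpl. repeat split; auto. lia.
Qed.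

Lemma rstep_ctx_ren : forall xi zeta E E', rstep_ctx E E' ->
  clos_trans ectx rstep_ctx (ren_ectx xi zeta E) (ren_ectx xi zeta E').
Proof.
  intros xi zeta E E' H; induction H; simpl.
  - apply (clos_trans_map rstep_ctx rstep_ctx (fun x => EApp x (ren_tm xi zeta t))); auto. intros; constructor; auto.
  - apply (clos_trans_map rstep rstep_ctx (fun x => EApp (ren_ectx xi zeta E) x)); [intros; constructor; auto|]. apply rstep_ren; auto.
  - apply (clos_trans_map rstep_ctx rstep_ctx ESuc); auto. intros; constructor; auto.
  - apply (clos_trans_map rstep rstep_ctx (fun x => ENrec A x _ _)); [intros; constructor; auto|]. apply rstep_ren; auto.
  - apply (clos_trans_map rstep rstep_ctx (fun x => ENrec A _ x _)); [intros; constructor; auto|]. apply rstep_ren; auto.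
  - apply (clos_trans_map rstep_ctx rstep_ctx (fun x => ENrec A _ _ x)); auto. intros; constructor; auto.
Qed.

Lemma rt_ctx_ren : forall xi zeta E E', clos_refl_trans ectx rstep_ctx E E' ->
  clos_refl_trans ectx rstep_ctx (ren_ectx xi zeta E) (ren_ectx xi zeta E').
Proof.
  intros xi zeta E E' H. induction H; eauto using rt_refl, rt_trans.
  apply clos_t_clos_rt, rstep_ctx_ren; assumption.
Qed.

Lemma rt_fill : forall E E' t t', clos_refl_trans ectx rstep_ctx E E' -> clos_refl_trans tm rstep t t' ->
  clos_refl_trans tm rstep (fill E t) (fill E' t').
Proof.
  intros. eapply rt_trans.
  - apply (clos_refl_trans_map rstep_ctx rstep (fun x => fill x t)); eauto. intros; apply rstep_fill_ctx; auto.
  - apply (clos_refl_trans_map rstep rstep (fill E')); eauto. intros; apply rstep_fill; auto.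
Qed.

Ltac rtc f := apply (clos_refl_trans_map rstep rstep f); [intros; constructor; auto|]; auto.

Lemma rt_app : forall a a' b b', clos_refl_trans tm rstep a a' -> clos_refl_trans tm rstep b b' ->
  clos_refl_trans tm rstep (App a b) (App a' b').
Proof. intros. apply rt_trans with (App a' b). rtc (fun x => App x b). rtc (fun x => App a' x). Qed.

Lemma rt_nrec : forall A a a' b b' c c', clos_refl_trans tm rstep a a' -> clos_refl_trans tm rstep b b' ->
  clos_refl_trans tm rstep c c' -> clos_refl_trans tm rstep (Nrec A a b c) (Nrec A a' b' c').
Proof. intros. apply rt_trans with (Nrec A a' b c). rtc (fun x => Nrec A x b c).
  apply rt_trans with (Nrec A a' b' c).
  rtc (fun x => Nrec A a' x c). rtc (fun x => Nrec A a' b' x). Qed.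

Lemma rt_gsub_csub :
  (forall t sg th th', (forall a, fst (th a) = fst (th' a) /\
     clos_refl_trans ectx rstep_ctx (snd (th a)) (snd (th' a))) ->
     clos_refl_trans tm rstep (gsub sg th t) (gsub sg th' t)) /\
  (forall c sg th th', (forall a, fst (th a) = fst (th' a) /\
     clos_refl_trans ectx rstep_ctx (snd (th a)) (snd (th' a))) ->
     clos_refl_trans cmd rstep_cmd (gsub_cmd sg th c) (gsub_cmd sg th' c)).
Proof.
  apply tm_cmd_mut; intros; simpl.
  - apply rt_refl.
  - rtc (Lam t). apply H. intros a; unfold csub_lam; simpl. destruct (H0 a); split; auto.
    apply rt_ctx_ren; auto.
  - apply rt_app; auto.
  - apply (clos_refl_trans_map rstep_cmd rstep (Mu t)); [intros; constructor; auto|]. apply H.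
    intros [|a]; simpl; [split; auto; apply rt_refl|]. destruct (H0 a); split; auto.
    apply rt_ctx_ren; auto.
  - apply rt_refl.
  - rtc Suc.
  - apply rt_nrec; auto.
  - destruct (H0 n) as [Hf Hs]. rewrite Hf.
    apply (clos_refl_trans_map rstep rstep_cmd (Pass (fst (th' n)))); [intros; constructor; auto|].
    apply rt_fill; auto.
Qed.

Lemma rt_csub_pop : forall b E E' c, rstep_ctx E E' ->
  clos_refl_trans cmd rstep_cmd (gsub_cmd Var (csub_pop b E) c) (gsub_cmd Var (csub_pop b E') c).
Proof. intros. apply rt_gsub_csub. intros [|a]; simpl; split; auto; try apply rt_refl.
  apply rt_step; auto. Qed.

Lemma esize_rstep_ctx : forall E E', rstep_ctx E E' -> esize E' = esize E.
Proof. intros E E' H; induction H; simpl; auto. Qed.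

Lemma rstep_ctx_ecomp : forall E E' F, rstep_ctx E E' -> rstep_ctx (ecomp E F) (ecomp E' F).
Proof. intros E E' F H; induction H; simpl; constructor; auto. Qed.

Lemma SNE_ecomp_l : forall E F, SNE (ecomp E F) -> SNE E.
Proof. intros. apply (sn_back rstep_ctx rstep_ctx (fun E => ecomp E F)); auto.
  intros; apply t_step; apply rstep_ctx_ecomp; auto. Qed.

(* Stuck terms: strongly normalising and neutral along all their reducts
   (variables and their applications to strongly normalising arguments). *)
Definition stuck h := SN h /\ forall h', clos_refl_trans tm rstep h h' -> neutral h'.

(* If [[b]E[0]] is SN then so is [[b]E[h]] for stuck [h]: [h] never interacts
   with [E], so the reductions of [E] are exactly those of [E[0]]. *)
Lemma SNc_fill_stuck : forall b E h,
  SNc (Pass b (fill E Zero)) -> stuck h -> SNc (Pass b (fill E h)).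
Proof.
  intros b E h Hx. remember (Pass b (fill E Zero)) as x eqn:Hxeq. revert E Hxeq h.
  induction Hx as [x _ IHx]. intros E -> h [Hh Hn].
  induction Hh as [h Hh IHh].
  constructor. intros c' Hc'.
  destruct (rstep_cmd_Pass_inv _ _ _ Hc') as [[u' [Hu ->]]|[A [c [Heq ->]]]].
  - destruct (rstep_fill_neutral E h u' (Hn h (rt_refl _ _ _)) Hu)
      as [[h' [Hh' ->]]|[E' [HE ->]]].
    + apply IHh; auto. intros; apply Hn. eapply rt_trans; [apply rt_step; eauto | auto].
    + apply (IHx (Pass b (fill E' Zero))); [constructor; apply rstep_fill_ctx; auto | reflexivity |].
      split; [constructor; exact Hh | exact Hn].
  - apply fill_Mu in Heq. destruct Heq; subst. exfalso. apply (Hn (Mu A c)); apply rt_refl.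
Qed.

Lemma SNc_beta_expand : forall u, SN u -> forall b E A body,
  (forall u', clos_refl_trans tm rstep u u' -> SNc (Pass b (fill E (subst1 body u')))) ->
  SNc (Pass b (fill E (App (Lam A body) u))).
Proof.
  intros u Hu. induction Hu as [u Hu IHu]. intros b E A body Hyp.
  refine (sn_tc_ind cmd rstep_cmd (fun x => forall E body,
    (forall u', clos_refl_trans tm rstep u u' -> SNc (Pass b (fill E (subst1 body u')))) ->
    x = Pass b (fill E (subst1 body u)) -> SNc (Pass b (fill E (App (Lam A body) u))))
    _ _ (Hyp u (rt_refl _ _ _)) E body Hyp eq_refl).
  clear E body Hyp. intros x IHx E body Hyp ->.
  constructor; intros c' Hc'.
  destruct (rstep_cmd_Pass_inv _ _ _ Hc') as [[t' [Ht ->]]|[A0 [c [Heq ->]]]].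
  2: { apply fill_Mu in Heq; destruct Heq; discriminate. }
  destruct (rstep_fill_neutral E (App (Lam A body) u) t' I Ht) as [[h' [Hh ->]]|[E' [HE ->]]].
  - inversion Hh; subst.
    + apply Hyp; apply rt_refl.
    + match goal with H : rstep (Lam _ _) _ |- _ => inversion H; subst end.
      assert (Hsub : forall u', clos_trans cmd rstep_cmd
                 (Pass b (fill E (subst1 body u'))) (Pass b (fill E (subst1 b' u')))).
      { intros u'. apply (clos_trans_map rstep _ (fun x => Pass b (fill E x))).
        - intros. apply rstep_cmd_fill. assumption.
        - apply rstep_subst1. assumption. }
      apply (IHx _ (Hsub u)); [|reflexivity].
      intros u' Hu'. eapply sn_tc; [apply Hyp, Hu' | apply Hsub].
    + apply IHu; auto. intros u'' Hu''. apply Hyp. eapply rt_trans; [apply rt_step; eauto | auto].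
  - apply (IHx (Pass b (fill E' (subst1 body u)))); [| |reflexivity].
    + apply t_step; constructor; apply rstep_fill_ctx; auto.
    + intros u' Hu'. apply (sn_step _ _ (Pass b (fill E (subst1 body u')))); [apply Hyp; auto|].
      constructor; apply rstep_fill_ctx; auto.
Qed.

Lemma SNc_rec0_expand : forall b E A r s,
  SN s -> SNc (Pass b (fill E r)) -> SNc (Pass b (fill E (Nrec A r s Zero))).
Proof.
  intros b E A r s Hs Hx. remember (Pass b (fill E r)) as x eqn:Hxeq.
  revert x Hx E r Hxeq. induction Hs as [s Hs IHs].
  intros x Hx. induction Hx as [x Hx IHx]. intros E r ->.
  constructor; intros c' Hc'.
  destruct (rstep_cmd_Pass_inv _ _ _ Hc') as [[t' [Ht ->]]|[A0 [c [Heq ->]]]].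
  2: { apply fill_Mu in Heq; destruct Heq; discriminate. }
  destruct (rstep_fill_neutral E (Nrec A r s Zero) t' I Ht) as [[h' [Hh ->]]|[E' [HE ->]]].
  - inversion Hh as [| | | | | | | | | | | | | |A1 r1 s1 t1 t2 H0]; subst.
    + constructor; exact Hx.
    + apply (IHx (Pass b (fill E r'))); [apply rstep_cmd_fill; auto | reflexivity].
    + apply (IHs s') with (x := Pass b (fill E r)); auto. constructor; exact Hx.
    + inversion H0.
  - apply (IHx (Pass b (fill E' r))); [constructor; apply rstep_fill_ctx; auto | reflexivity].
Qed.

Lemma numeral_inj : forall n m, numeral n = numeral m -> n = m.
Proof. induction n; destruct m; simpl; intros H; inversion H; auto. Qed.

Lemma SNc_recS_expand : forall b E A r s n,
  SNc (Pass b (fill E (App (App s (numeral n)) (Nrec A r s (numeral n))))) ->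
  SNc (Pass b (fill E (Nrec A r s (Suc (numeral n))))).
Proof.
  intros b E A r s n Hx.
  refine (sn_tc_ind cmd rstep_cmd (fun x => SNc x -> forall E r s,
    x = Pass b (fill E (App (App s (numeral n)) (Nrec A r s (numeral n)))) ->
    SNc (Pass b (fill E (Nrec A r s (Suc (numeral n)))))) _ _ Hx Hx E r s eq_refl).
  clear E r s Hx. intros x IHx Hx E r s ->.
  constructor; intros c' Hc'.
  destruct (rstep_cmd_Pass_inv _ _ _ Hc') as [[t' [Ht ->]]|[A0 [c [Heq ->]]]].
  2: { apply fill_Mu in Heq; destruct Heq; discriminate. }
  destruct (rstep_fill_neutral E (Nrec A r s (Suc (numeral n))) t' I Ht)
    as [[h' [Hh ->]]|[E' [HE ->]]].
  - inversion Hh; subst.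
    + match goal with H : numeral _ = numeral _ |- _ => apply numeral_inj in H; subst end.
      exact Hx.
    + assert (Hs : clos_trans cmd rstep_cmd
        (Pass b (fill E (App (App s (numeral n)) (Nrec A r s (numeral n)))))
        (Pass b (fill E (App (App s (numeral n)) (Nrec A r' s (numeral n)))))).
      { apply t_step, rstep_cmd_fill, SC_AppR, SC_NrecR. assumption. }
      apply (IHx _ Hs); [eapply sn_tc; eauto | reflexivity].
    + assert (Hs : clos_trans cmd rstep_cmd
        (Pass b (fill E (App (App s (numeral n)) (Nrec A r s (numeral n)))))
        (Pass b (fill E (App (App s' (numeral n)) (Nrec A r s' (numeral n)))))).
      { eapply t_trans; apply t_step, rstep_cmd_fill.
        - apply SC_AppL, SC_AppL. eassumption.
        - apply SC_AppR, SC_NrecS. assumption. }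
      apply (IHx _ Hs); [eapply sn_tc; eauto | reflexivity].
    + exfalso. eapply (numeral_normal (S n)). eassumption.
  - assert (Hs : clos_trans cmd rstep_cmd
        (Pass b (fill E (App (App s (numeral n)) (Nrec A r s (numeral n)))))
        (Pass b (fill E' (App (App s (numeral n)) (Nrec A r s (numeral n)))))).
    { apply t_step; constructor; apply rstep_fill_ctx; auto. }
    apply (IHx _ Hs); [eapply sn_tc; eauto | reflexivity].
Qed.

(* Head expansion for mu: if [E] is SN and the command obtained by
   instantiating the mu-variable by [(b, E)] is SN, then [[b]E[mu. c]] is SN.
   The proof is by induction on that command, on the depth of [E] (a frame is
   absorbed), and on the SN of [E] (a reduction inside [E]). *)
Lemma SNc_mu_expand : forall b E A c,
  SNE E -> SNc (gsub_cmd Var (csub_pop b E) c) -> SNc (Pass b (fill E (Mu A c))).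
Proof.
  intros b E A c HE Hx.
  refine (sn_tc_ind cmd rstep_cmd (fun x => SNc x -> forall b E c A, SNE E ->
    x = gsub_cmd Var (csub_pop b E) c -> SNc (Pass b (fill E (Mu A c))))
    _ _ Hx Hx b E c A HE eq_refl).
  clear b E A c HE Hx. intros x IHx Hx b E.
  remember (esize E) as m. revert E Heqm. induction m as [m IHm] using lt_wf_ind.
  intros E Hm c A HE. revert Hm c A. induction HE as [E HEacc IHE]. intros Hm c A Hxeq.
  constructor; intros c' Hc'.
  destruct (rstep_cmd_Pass_inv _ _ _ Hc') as [[t' [Ht ->]]|[A0 [c0 [Heq ->]]]].
  2: { apply fill_Mu in Heq; destruct Heq as [-> Heq]. injection Heq as <- <-.
       rewrite ren_pop_as_gsub. subst x. exact Hx. }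
  destruct (rstep_fill_mu E A c t' Ht)
    as [[h' [Hh ->]]|[[E' [HE ->]]|[E1 [F [B [-> [Hs ->]]]]]]].
  - inversion Hh; subst.
    + simpl in Hx. rewrite gsub_pop_lift in Hx. exact Hx.
    + match goal with H : rstep_cmd c ?c' |- _ => rename c' into c2 end.
      apply (IHx (gsub_cmd Var (csub_pop b E) c2)); [| | constructor; exact HEacc | reflexivity].
      * apply rstep_gsub; auto.
      * eapply sn_tc; [exact Hx | apply rstep_gsub; auto].
  - destruct (clos_refl_trans_cases _ _ _ (rt_csub_pop b E E' c HE)) as [Heq|Htc].
    + apply IHE; auto. rewrite (esize_rstep_ctx _ _ HE); auto. rewrite Hxeq; exact Heq.
    + rewrite <- Hxeq in Htc. apply (IHx _ Htc); [eapply sn_tc; eauto | | reflexivity].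
      apply (sn_step _ _ E); [constructor; exact HEacc | exact HE].
  - apply (IHm (esize E1)); auto.
    + subst; auto.
    + apply (SNE_ecomp_l E1 F). constructor; exact HEacc.
    + rewrite csub_pop_ssub. auto.
Qed.

Definition orth (K : nat * ectx -> Prop) (t : tm) : Prop :=
  forall xi zeta q, K q -> SNc (Pass (fst q) (fill (snd q) (ren_tm xi zeta t))).

Fixpoint Kred (A : ty) (q : nat * ectx) : Prop :=
  match A with
  | TNat => forall xi zeta n,
      SNc (Pass (zeta (fst q)) (fill (ren_ectx xi zeta (snd q)) (numeral n)))
  | Arr A1 B => exists E u,
      snd q = ecomp E (EApp Hole u) /\ orth (Kred A1) u /\ Kred B (fst q, E)
  end.

Definition Red (A : ty) : tm -> Prop := orth (Kred A).

Lemma Red_plug : forall A t q, Red A t -> Kred A q -> SNc (Pass (fst q) (fill (snd q) t)).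
Proof.
  intros A t q Ht Hq. specialize (Ht (fun n => n) (fun n => n) q Hq).
  rewrite (proj1 ren_id) in Ht. exact Ht.
Qed.

Lemma Kred_nat_numeral : forall b E n, Kred TNat (b, E) -> SNc (Pass b (fill E (numeral n))).
Proof.
  intros b E n Hq. specialize (Hq (fun n => n) (fun n => n) n).
  simpl in Hq. rewrite ren_id_ctx in Hq. exact Hq.
Qed.

Lemma Red_ren : forall A t xi zeta, Red A t -> Red A (ren_tm xi zeta t).
Proof. unfold Red, orth. intros. rewrite (proj1 ren_ren). auto. Qed.

Lemma Kred_ren : forall A q xi zeta,
  Kred A q -> Kred A (zeta (fst q), ren_ectx xi zeta (snd q)).
Proof.
  induction A as [|A1 _ B IHB]; simpl; intros q xi zeta Hq.
  - intros xi' zeta' n. rewrite ren_ren_ctx.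
    exact (Hq (fun n => xi' (xi n)) (fun n => zeta' (zeta n)) n).
  - destruct Hq as [E [u [Heq [Hu HB]]]].
    exists (ren_ectx xi zeta E), (ren_tm xi zeta u). split; [|split].
    + rewrite Heq, ren_ecomp. reflexivity.
    + apply Red_ren. exact Hu.
    + apply (IHB (fst q, E)). exact HB.
Qed.

Lemma Red_rstep : forall A t t', Red A t -> rstep t t' -> Red A t'.
Proof.
  unfold Red, orth. intros A t t' Ht Htt' xi zeta q Hq.
  eapply sn_tc; [apply (Ht xi zeta q Hq)|].
  apply (clos_trans_map rstep _ (fun x => Pass (fst q) (fill (snd q) x))).
  - intros. apply rstep_cmd_fill. assumption.
  - apply rstep_ren. exact Htt'.
Qed.

Lemma Red_rt : forall A t t', Red A t -> clos_refl_trans tm rstep t t' -> Red A t'.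
Proof. intros A t t' Ht H. induction H; eauto using Red_rstep. Qed.

Fixpoint ctx_vars (A : ty) : ectx :=
  match A with
  | TNat => Hole
  | Arr A1 B => ecomp (ctx_vars B) (EApp Hole (Var 0))
  end.

Lemma SNc_numeral : forall b n, SNc (Pass b (numeral n)).
Proof.
  intros. constructor. intros c' Hc'.
  destruct (rstep_cmd_Pass_inv _ _ _ Hc') as [[t' [Ht ->]]|[A0 [c [Heq ->]]]].
  - exfalso; eapply numeral_normal; eauto.
  - destruct n; discriminate.
Qed.

Lemma stuck_var : forall n, stuck (Var n).
Proof.
  intros n. split.
  - constructor; intros y H; inversion H.
  - intros h' H. apply clos_rt_rt1n in H. inversion H as [|y z Hy]; subst; simpl; auto.
    inversion Hy.
Qed.

Lemma app_rt : forall x y, clos_refl_trans_1n tm rstep x y -> forall h u, x = App h u ->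
  (forall h', clos_refl_trans tm rstep h h' -> neutral h') ->
  exists h' u', y = App h' u' /\ clos_refl_trans tm rstep h h'.
Proof.
  intros x y H. induction H; intros h u -> Hn.
  - exists h, u; split; auto. apply rt_refl.
  - inversion H; subst.
    + exfalso; apply (Hn (Lam A b)); apply rt_refl.
    + exfalso; apply (Hn (Mu A c)); apply rt_refl.
    + destruct (IHclos_refl_trans_1n t' u eq_refl) as [h' [u' [-> Hr]]].
      * intros; apply Hn. eapply rt_trans; [apply rt_step; eauto|auto].
      * exists h', u'; split; auto. eapply rt_trans; [apply rt_step; eauto|auto].
    + destruct (IHclos_refl_trans_1n h s' eq_refl Hn) as [h' [u' [-> Hr]]].
      exists h', u'; split; auto.
Qed.

Lemma stuck_app : forall h u, stuck h -> SN u -> stuck (App h u).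
Proof.
  intros h u [Hh Hn] Hu. split.
  - revert u Hu Hn. induction Hh as [h Hh IHh]. intros u Hu Hn. induction Hu as [u Hu IHu].
    constructor; intros y Hy. inversion Hy; subst.
    + exfalso; apply (Hn (Lam A b)); apply rt_refl.
    + exfalso; apply (Hn (Mu A c)); apply rt_refl.
    + apply IHh; auto. constructor; exact Hu. intros; apply Hn. eapply rt_trans; [apply rt_step; eauto|auto].
    + apply IHu; auto.
  - intros y Hy. apply clos_rt_rt1n in Hy.
    destruct (app_rt _ _ Hy h u eq_refl Hn) as [h' [u' [-> _]]]. simpl; auto.
Qed.

Lemma CR : forall A, (forall b, Kred A (b, ctx_vars A)) /\ (forall t, Red A t -> SN t) /\
  (forall q h, Kred A q -> stuck h -> SNc (Pass (fst q) (fill (snd q) h))).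
Proof.
  induction A as [|A1 [I1 [S1 N1]] A2 [I2 [S2 N2]]].
  - assert (I : forall b, Kred TNat (b, ctx_vars TNat)).
    { simpl; intros. apply SNc_numeral. }
    split; [exact I|split].
    + intros t Ht. apply (SNc_Pass_inv 0). apply (Red_plug TNat t (0, Hole)); auto.
    + intros [b E] h Hq Hh. apply SNc_fill_stuck; [|exact Hh].
      apply (Kred_nat_numeral b E 0). exact Hq.
  - assert (I : forall b, Kred (Arr A1 A2) (b, ctx_vars (Arr A1 A2))).
    { intros b. exists (ctx_vars A2), (Var 0). split; [reflexivity | split; [|apply I2]].
      intros xi zeta q Hq. apply N1; [exact Hq | apply stuck_var]. }
    split; [exact I|split].
    + intros t Ht. pose proof (Red_plug _ t _ Ht (I 0)) as H.
      apply SNc_Pass_inv, SN_fill_inv in H. exact H.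
    + intros [b E] h [E' [u [Heq [Hu HB]]]] Hh. simpl in *. subst E.
      rewrite fill_ecomp. apply (N2 (b, E')); [exact HB|].
      apply stuck_app; [exact Hh | apply S1; exact Hu].
Qed.

Lemma Red_SN : forall A t, Red A t -> SN t.
Proof. intros A. apply (CR A). Qed.

Lemma Kred_stuck : forall A q h, Kred A q -> stuck h -> SNc (Pass (fst q) (fill (snd q) h)).
Proof. intros A. apply (CR A). Qed.

Lemma Red_var : forall A n, Red A (Var n).
Proof. intros A n xi zeta q Hq. apply (Kred_stuck A); [exact Hq | apply stuck_var]. Qed.

Lemma Red_lam : forall A B b,
  (forall xi zeta u, Red A u -> Red B (subst1 (ren_tm (up xi) zeta b) u)) ->
  Red (Arr A B) (Lam A b).
Proof.
  intros A B b Hb xi zeta [b0 E] [E' [u [Heq [Hu HB]]]]. simpl in *. subst E.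
  rewrite fill_ecomp. apply SNc_beta_expand.
  - apply (Red_SN A). exact Hu.
  - intros u' Hu'. apply (Red_plug B _ (b0, E')); auto.
    apply Hb, (Red_rt A u); assumption.
Qed.

Lemma Red_app : forall A B t s, Red (Arr A B) t -> Red A s -> Red B (App t s).
Proof.
  intros A B t s Ht Hs xi zeta [b E] Hq.
  assert (HK : Kred (Arr A B) (b, ecomp E (EApp Hole (ren_tm xi zeta s)))).
  { exists E, (ren_tm xi zeta s). split; [reflexivity | split; [apply Red_ren, Hs | exact Hq]]. }
  specialize (Ht xi zeta _ HK). simpl in *. rewrite fill_ecomp in Ht. exact Ht.
Qed.

Lemma Red_zero : Red TNat Zero.
Proof. intros xi zeta [b E] Hq. apply (Kred_nat_numeral b E 0). exact Hq. Qed.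

Lemma Red_suc : forall t, Red TNat t -> Red TNat (Suc t).
Proof.
  intros t Ht xi zeta [b E] Hq.
  assert (HK : Kred TNat (b, ecomp E (ESuc Hole))).
  { intros xi' zeta' n. simpl. rewrite ren_ecomp, fill_ecomp.
    exact (Hq xi' zeta' (S n)). }
  specialize (Ht xi zeta _ HK). simpl in *. rewrite fill_ecomp in Ht. exact Ht.
Qed.

Lemma SNc_nrec_numeral : forall n A b E r s,
  Kred A (b, E) -> Red A r -> Red (Arr TNat (Arr A A)) s ->
  SNc (Pass b (fill E (Nrec A r s (numeral n)))).
Proof.
  induction n as [|n IHn]; intros A b E r s HE Hr Hs.
  - apply SNc_rec0_expand; [apply (Red_SN _ s Hs) | apply (Red_plug A r (b, E)); assumption].
  - apply SNc_recS_expand.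
    set (v := Nrec A r s (numeral n)).
    assert (HK : Kred (Arr TNat (Arr A A))
                   (b, ecomp (ecomp E (EApp Hole v)) (EApp Hole (numeral n)))).
    { exists (ecomp E (EApp Hole v)), (numeral n). split; [reflexivity | split].
      - intros xi zeta [b' E'] Hq. rewrite ren_numeral. apply Kred_nat_numeral. exact Hq.
      - exists E, v. split; [reflexivity | split; [|exact HE]].
        intros xi zeta [b' E'] Hq. unfold v. simpl. rewrite ren_numeral.
        apply IHn; [exact Hq | apply Red_ren, Hr | apply Red_ren, Hs]. }
    pose proof (Red_plug _ s _ Hs HK) as H. simpl in H. rewrite !fill_ecomp in H. exact H.
Qed.

Lemma Red_nrec : forall A r s t,
  Red A r -> Red (Arr TNat (Arr A A)) s -> Red TNat t -> Red A (Nrec A r s t).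
Proof.
  intros A r s t Hr Hs Ht xi zeta [b E] Hq.
  assert (HK : Kred TNat (b, ecomp E (ENrec A (ren_tm xi zeta r) (ren_tm xi zeta s) Hole))).
  { intros xi' zeta' n. simpl. rewrite ren_ecomp, fill_ecomp. simpl.
    apply SNc_nrec_numeral.
    - apply (Kred_ren A (b, E)). exact Hq.
    - apply Red_ren, Red_ren, Hr.
    - apply Red_ren, Red_ren, Hs. }
  specialize (Ht xi zeta _ HK). simpl in *. rewrite fill_ecomp in Ht. exact Ht.
Qed.

Lemma Red_mu : forall A c,
  (forall xi zeta b E, Kred A (b, E) ->
     SNc (gsub_cmd Var (csub_pop b E) (ren_cmd xi (up zeta) c))) ->
  Red A (Mu A c).
Proof.
  intros A c Hc xi zeta [b E] Hq. simpl.
  apply SNc_mu_expand; [|apply Hc; exact Hq].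
  pose proof (Kred_stuck A (b, E) (Var 0) Hq (stuck_var 0)) as H.
  apply SNc_Pass_inv, SNE_fill_inv in H. exact H.
Qed.

Definition env_red (G D : list ty) (sg : nat -> tm) (th : csub) : Prop :=
  (forall x A, nth_error G x = Some A -> Red A (sg x)) /\
  (forall a A, nth_error D a = Some A -> Kred A (th a)).

Lemma env_red_lam : forall G D sg th A u xi zeta,
  env_red G D sg th -> Red A u ->
  env_red (A :: G) D (fun n => match n with 0 => u | S m => ren_tm xi zeta (sg m) end)
          (csub_ren xi zeta th).
Proof.
  intros G D sg th A u xi zeta [Hsg Hth] Hu. split.
  - intros [|x] B Hx; simpl in Hx.
    + injection Hx as <-. exact Hu.
    + apply Red_ren. exact (Hsg x B Hx).
  - intros a B Ha. apply (Kred_ren B (th a)). exact (Hth a B Ha).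
Qed.

Lemma env_red_mu : forall G D sg th A b E xi zeta,
  env_red G D sg th -> Kred A (b, E) ->
  env_red G (A :: D) (fun n => ren_tm xi zeta (sg n))
          (fun a => match a with 0 => (b, E) | S m => csub_ren xi zeta th m end).
Proof.
  intros G D sg th A b E xi zeta [Hsg Hth] HE. split.
  - intros x B Hx. apply Red_ren. exact (Hsg x B Hx).
  - intros [|a] B Ha; simpl in Ha.
    + injection Ha as <-. exact HE.
    + apply (Kred_ren B (th a)). exact (Hth a B Ha).
Qed.

Scheme has_type_mut := Induction for has_type Sort Prop
with cmd_ok_mut := Induction for cmd_ok Sort Prop.

Lemma adequacy : forall G D t A, has_type G D t A ->
  forall sg th, env_red G D sg th -> Red A (gsub sg th t).
Proof.
  apply (has_type_mut
    (fun G D t A _ => forall sg th, env_red G D sg th -> Red A (gsub sg th t))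
    (fun G D c _ => forall sg th, env_red G D sg th -> SNc (gsub_cmd sg th c)));
    intros; simpl.
  - apply H. exact e.
  - apply Red_lam. intros xi zeta u Hu. rewrite subst1_ren_gsub.
    apply H. apply env_red_lam; assumption.
  - apply (Red_app A B); auto.
  - apply Red_zero.
  - apply Red_suc; auto.
  - apply Red_nrec; auto.
  - apply Red_mu. intros xi zeta b E HE. rewrite pop_ren_gsub_cmd.
    apply H. apply env_red_mu; assumption.
  - destruct H0 as [Hsg Hth]. apply (Red_plug A).
    + apply H. split; assumption.
    + apply Hth. exact e.
Qed.

Definition csub_canon (D : list ty) : csub :=
  fun a => match nth_error D a with Some B => (a, ctx_vars B) | None => (a, Hole) end.

Lemma env_red_canon : forall G D, env_red G D Var (csub_canon D).
Proof.
  intros G D. split.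
  - intros x A _. apply Red_var.
  - intros a A Ha. unfold csub_canon. rewrite Ha. apply CR.
Qed.

(* Strong normalisation: by adequacy [t], substituted by the canonical pair, is
   reducible, hence SN; SN is reflected by substitution and official reduction is
   contained in relaxed reduction. *)
Theorem mainTheorem13 :
  forall (G D : list ty) (t : tm) (A : ty),
    has_type G D t A ->
    ~ (exists f : nat -> tm, f 0 = t /\ forall n, step (f n) (f (S n))).
Proof.
  intros G D t A Ht [f [Hf0 Hf]].
  assert (Hsn : SN t).
  { apply (SN_gsub_inv Var (csub_canon D)), (Red_SN A).
    apply (adequacy G D t A Ht). apply env_red_canon. }
  apply (sn_no_chain tm rstep t Hsn).
  exists f. split; [exact Hf0 | intros n; apply step_rstep, Hf].
Qed.
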